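(* The invariant probability $\mu$ of the kernel $M$ has no atom; in particular $\mu(\{0\})=0$.
   Context: $M$ is the Markov kernel $M(x,\cdot)=\frac16\sum_{i=1}^6\delta_{z_i(x)}$ on $[0,1/2]$, where for $x\in[0,1/2]$: $z_1(x)=\frac{3x}{2+2x}$; $z_2(x)=\frac{3x}{2-x}$ if $x<2/7$ and $\frac{2-4x}{2-x}$ if $x\ge2/7$; $z_3(x)=\frac{1+x}{3-3x}$ if $x<1/5$ and $\frac{2-4x}{3-3x}$ if $x\ge1/5$; $z_4(x)=\frac{1+x}{4-2x}$; $z_5(x)=\frac{1-2x}{4-2x}$; $z_6(x)=\frac{1-2x}{3}$. $M$ has a unique invariant probability measure, denoted $\mu$. *)

From HB Require Import structures.
From mathcomp Require Import all_boot all_order all_algebra.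
From mathcomp Require Import all_classical all_reals all_analysis.
Set Implicit Arguments. Unset Strict Implicit. Unset Printing Implicit Defensive.
Import Order.TTheory GRing.Theory Num.Theory.
Local Open Scope ring_scope.
Local Open Scope classical_set_scope.

(* The six branches z_1, ..., z_6 of the Markov kernel M on [0,1/2],
   indexed by i : 'I_6 (i = 0 is z_1, ..., i = 5 is z_6). *)
Definition zmap (R : realType) (i : 'I_6) (x : R) : R :=
  match val i with
  | 0 => 3 * x / (2 + 2 * x)
  | 1 => if x < 2 / 7 then 3 * x / (2 - x) else (2 - 4 * x) / (2 - x)
  | 2 => if x < 1 / 5 then (1 + x) / (3 - 3 * x) else (2 - 4 * x) / (3 - 3 * x)
  | 3 => (1 + x) / (4 - 2 * x)
  | 4 => (1 - 2 * x) / (4 - 2 * x)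
  | _ => (1 - 2 * x) / 3
  end.

Definition I0 (R : realType) : set R := `[0, 2^-1]%classic.

(* A probability measure on R (Borel) is a probability on [0,1/2] when it
   gives full mass to [0,1/2]; it is M-invariant when
   mu(A) = \int M(x,A) dmu(x) = (1/6) sum_i mu({x in [0,1/2] | z_i(x) in A}). *)
Definition M_invariant (R : realType) (mu : probability R R) : Prop :=
  mu (@I0 R) = 1%E /\
  forall A : set R, measurable A ->
    mu A = (\sum_(i < 6) (6^-1)%:E * mu (@I0 R `&` (zmap i @^-1` A)))%E.

From HB Require Import structures.
From mathcomp Require Import all_boot all_order all_algebra.
From mathcomp Require Import all_classical all_reals all_analysis.
From mathcomp Require Import ring lra.
Set Implicit Arguments. Unset Strict Implicit. Unset Printing Implicit Defensive.
Import Order.TTheory GRing.Theory Num.Theory.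
Local Open Scope ring_scope.
Local Open Scope classical_set_scope.

(* Suppose mu has an atom.  Only finitely many atoms carry at least a given
   positive mass, so there is a heaviest atom mass m > 0, and a leftmost point
   x0 carrying it.  Invariance gives 6 mu{x} = sum_i mu(z_i^-1{x} /\ [0,1/2]),
   and every branch z_i has at most two explicit preimages of x, so 6 m is
   bounded by the masses of at most seven points.  Evaluated at x = 1/2 and
   x = 0 this gives mu{0} <= mu{1/2} <= m/2.  At x0 the bound is strict: the
   z_1-preimage 2 x0 / (3 - 2 x0) lies left of x0 (or x0 = 1/2 and z_2 has a
   single preimage), while the extra preimages at x0 = 1/4 and x0 = 1/3 are
   the point 0, which weighs at most m/2.  Hence 6 m < 6 m. *)

Section finite_sets.
Variables (R : realType) (nu : {measure set R -> \bar R}).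

Lemma measurable_sub_seq (A : set R) (s : seq R) : A `<=` [set` s] -> measurable A.
Proof.
move=> As; apply: countable_measurable; first exact: measurable_set1.
exact/finite_set_countable/(sub_finite_set As)/finite_seq.
Qed.

Lemma measurable_set_seq (s : seq R) : measurable [set` s].
Proof. exact: (measurable_sub_seq (@subset_refl _ [set` s])). Qed.

Lemma set_seq_cons (y : R) (s : seq R) : [set` y :: s] = [set y] `|` [set` s].
Proof. by apply/seteqP; split => z /=; rewrite inE => /predU1P. Qed.

Lemma measure_set_seq_le (s : seq R) :
  (nu [set` s] <= \sum_(y <- s) nu [set y])%E.
Proof.
elim: s => [|y s IH]; first by rewrite set_nil measure0 big_nil.
rewrite set_seq_cons big_cons.
apply: le_trans (leeD (lexx _) IH).
by apply: measureU2; [exact: measurable_set1 | exact: measurable_set_seq].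
Qed.

Lemma measure_set_seq (s : seq R) : uniq s ->
  nu [set` s] = (\sum_(y <- s) nu [set y])%E.
Proof.
elim: s => [|y s IH /= /andP[ys us]]; first by rewrite set_nil measure0 big_nil.
rewrite set_seq_cons big_cons -(IH us) measureU //.
- exact: measurable_set_seq.
- by apply/seteqP; split => // z [/= -> /= zs]; rewrite zs in ys.
Qed.

Lemma measure_sub_seq_le (A : set R) (s : seq R) : A `<=` [set` s] ->
  (nu A <= \sum_(y <- s) nu [set y])%E.
Proof.
move=> As; apply: le_trans (measure_set_seq_le s).
apply: le_measure; rewrite ?inE //; first exact: measurable_sub_seq As.
exact: measurable_set_seq.
Qed.

End finite_sets.

Lemma seq_argmax (T : eqType) (R : realDomainType) (f : T -> R) (s : seq T) :
  s != [::] -> exists2 y, y \in s & {in s, forall z, f z <= f y}.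
Proof.
elim: s => // a [|b s] IH _.
  by exists a; rewrite ?mem_head // => z; rewrite mem_seq1 => /eqP ->.
have [y ys ymax] := IH isT.
have [ay|ya] := leP (f a) (f y).
  exists y => [|z]; first by rewrite inE ys orbT.
  by rewrite inE => /predU1P[->|/ymax].
exists a => [|z]; first exact: mem_head.
rewrite inE => /predU1P[->//|/ymax zy]; exact: le_trans zy (ltW ya).
Qed.

Section atoms.
Variables (R : realType) (mu : probability R R).

Definition atom (y : R) : R := fine (mu [set y]).

Lemma atomE (y : R) : mu [set y] = (atom y)%:E.
Proof. by rewrite fineK // fin_num_measure //; exact: measurable_set1. Qed.

Lemma atom_ge0 (y : R) : 0 <= atom y.
Proof. by rewrite -lee_fin -atomE measure_ge0. Qed.

Lemma measure_sub_seq_le_atom (A : set R) (s : seq R) : A `<=` [set` s] ->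
  fine (mu A) <= \sum_(y <- s) atom y.
Proof.
move=> As; rewrite -lee_fin fineK ?fin_num_measure //; last exact: measurable_sub_seq As.
rewrite -sumEFin; under eq_bigr do rewrite -atomE.
exact: measure_sub_seq_le.
Qed.

Lemma measure_set_seq_atom (s : seq R) : uniq s ->
  mu [set` s] = (\sum_(y <- s) atom y)%:E.
Proof.
move=> us; rewrite -sumEFin; under eq_bigr do rewrite -atomE.
exact: measure_set_seq.
Qed.

Lemma heavy_atoms_size (c : R) (s : seq R) : uniq s -> {in s, forall y, c <= atom y} ->
  (size s)%:R * c <= 1.
Proof.
move=> us heavy; rewrite -lee_fin.
apply: (@le_trans _ _ (mu [set` s])); last first.
  by apply: probability_le1; exact: measurable_set_seq.
rewrite measure_set_seq_atom // lee_fin mulr_natl.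
rewrite -[_ *+ _](iter_addr_0) -(count_predT s) -big_const_seq.
by rewrite big_seq_cond [X in _ <= X]big_seq_cond; apply: ler_sum => y /andP[/heavy].
Qed.

Lemma finite_heavy_atoms (c : R) : 0 < c -> exists s : seq R, s =i [pred y | c <= atom y].
Proof.
move=> c0; apply/not_existsP => nofin.
have grow n : exists s : seq R, [/\ uniq s, {in s, forall y, c <= atom y} & size s = n].
  elim: n => [|n [s [us heavy <-]]]; first by exists [::].
  have /existsNP[y] := nofin s; rewrite inE /=.
  have [/heavy -> //|ys nfy] := boolP (y \in s).
  have cy : c <= atom y by case: (c <= atom y) nfy.
  exists (y :: s); split => //=; first by rewrite ys.
  by move=> z; rewrite inE => /predU1P[->|/heavy].
have [s [us heavy sn]] := grow (Num.Def.archi_bound c^-1).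
have := heavy_atoms_size us heavy; rewrite sn.
have : 0 <= c^-1 by rewrite invr_ge0 ltW.
move/archi_boundP; rewrite -(ltr_pM2r c0) mulVf ?gt_eqF //.
lra.
Qed.

Lemma exists_leftmost_heaviest_atom (x : R) : 0 < atom x -> exists x0 : R,
  [/\ 0 < atom x0, forall y, atom y <= atom x0 & forall y, y < x0 -> atom y < atom x0].
Proof.
move=> ax; have [s sE] := finite_heavy_atoms ax.
have xs : x \in s by rewrite sE inE.
have [y0 y0s y0max] : exists2 y0, y0 \in s & {in s, forall z, atom z <= atom y0}.
  by apply: seq_argmax; apply: contraTneq xs => ->.
have le_atom_y0 y : atom y <= atom y0.
  have [xy|/ltW yx] := leP (atom x) (atom y); first by apply: y0max; rewrite sE.
  exact: le_trans yx (y0max x xs).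
set top := [seq y <- s | atom y == atom y0].
have y0top : y0 \in top by rewrite mem_filter eqxx.
have [x0 x0top x0left] : exists2 x0, x0 \in top & {in top, forall z, - z <= - x0}.
  by apply: seq_argmax; apply: contraTneq y0top => ->.
move: x0top; rewrite mem_filter => /andP[/eqP x0y0 x0s].
exists x0; rewrite x0y0; split => // [|y yx0].
  exact: lt_le_trans ax (y0max x xs).
rewrite lt_neqAle le_atom_y0 andbT; apply/eqP => yy0.
have ys : y \in s by rewrite sE inE yy0 (y0max x xs).
have := x0left y; rewrite mem_filter yy0 eqxx ys lerN2 => /(_ isT).
by rewrite leNgt yx0.
Qed.

End atoms.

Section kernel.
Variable R : realType.

(* [zpreim i x] lists every y in [0,1/2] with [zmap i y = x].  The guards are
   the ranges of the monotone pieces of the branches; the strict ones matter,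
   since at x = 1/2 both pieces of z_2 (and of z_3) lead back to one point. *)
Definition zpreim (i : nat) (x : R) : seq R :=
  match i with
  | 0 => [:: 2 * x / (3 - 2 * x)]
  | 1 => (if x < 2^-1 then [:: 2 * x / (3 + x)] else [::]) ++ [:: (2 - 2 * x) / (4 - x)]
  | 2 => (if (3^-1 <= x) && (x < 2^-1) then [:: (3 * x - 1) / (1 + 3 * x)] else [::])
           ++ [:: (2 - 3 * x) / (4 - 3 * x)]
  | 3 => if 4^-1 <= x then [:: (4 * x - 1) / (1 + 2 * x)] else [::]
  | 4 => if x <= 4^-1 then [:: (1 - 4 * x) / (2 - 2 * x)] else [::]
  | _ => if x <= 3^-1 then [:: (1 - 3 * x) / 2] else [::]
  end.

Arguments zpreim : simpl never.

Lemma fiber_sub_zpreim (i : 'I_6) (x : R) :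
  @I0 R `&` zmap i @^-1` [set x] `<=` [set` zpreim i x].
Proof.
move=> y [/=]; rewrite /I0 /= in_itv /= => /andP[y0 y1] <-.
case: i => [[|[|[|[|[|[|//]]]]]] i6]; rewrite /zmap /zpreim /=.
- rewrite mem_seq1; apply/eqP; field; lra.
- case: (ltP y (2 / 7)) => y27; rewrite mem_cat mem_seq1.
    rewrite ifT ?mem_seq1; last by rewrite ltr_pdivrMr; lra.
    apply/orP; left; apply/eqP; field; lra.
  apply/orP; right; apply/eqP; field; lra.
- case: (ltP y (1 / 5)) => y15; rewrite mem_cat mem_seq1.
    rewrite ifT ?mem_seq1; last by rewrite ler_pdivlMr ?ltr_pdivrMr; lra.
    apply/orP; left; apply/eqP; field; lra.
  apply/orP; right; apply/eqP; field; lra.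
- rewrite ifT ?mem_seq1; last by rewrite ler_pdivlMr; lra.
  apply/eqP; field; lra.
- rewrite ifT ?mem_seq1; last by rewrite ler_pdivrMr; lra.
  apply/eqP; field; lra.
- rewrite ifT ?mem_seq1; last lra.
  apply/eqP; field; lra.
Qed.

Lemma measurable_fiber (i : 'I_6) (x : R) : measurable (@I0 R `&` zmap i @^-1` [set x]).
Proof. exact: measurable_sub_seq (@fiber_sub_zpreim i x). Qed.

End kernel.

Local Notation mass mu i x := (\sum_(y <- zpreim i x) atom mu y).

Section mass_bounds.
Variables (R : realType) (mu : probability R R) (m : R).
Hypothesis atom_le : forall y, atom mu y <= m.
Hypothesis atom0_le : 2 * atom mu 0 <= m.

Lemma mass01_lt (x : R) : 0 < m -> 0 < x <= 2^-1 -> (forall y, y < x -> atom mu y < m) ->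
  mass mu 0 x + mass mu 1 x < 3 * m.
Proof.
move=> m0 /andP[x0 x1] left_lt; rewrite /zpreim /=.
have := atom_le ((2 - 2 * x) / (4 - x)).
case: (ltP x 2^-1) => x12; rewrite !big_cons !big_nil.
  have := atom_le (2 * x / (3 + x)).
  have : 2 * x / (3 - 2 * x) < x by rewrite ltr_pdivrMr; nra.
  move/left_lt; lra.
have := atom_le (2 * x / (3 - 2 * x)); lra.
Qed.

Lemma mass25_le (x : R) : mass mu 2 x + mass mu 5 x <= 2 * m.
Proof.
rewrite /zpreim /=.
have := atom_le ((2 - 3 * x) / (4 - 3 * x)).
case: (ltgtP x 3^-1) => x13; rewrite ?andbF !big_cat !big_cons !big_nil /=.
- have := atom_le ((1 - 3 * x) / 2); lra.
- have := atom_le ((3 * x - 1) / (1 + 3 * x)); have := le_trans (atom_ge0 mu 0) (atom_le 0).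
  by case: (x < 2^-1); rewrite ?big_cons ?big_nil; lra.
- rewrite ifT ?big_cons ?big_nil; last lra.
  have p1 : (3 * x - 1) / (1 + 3 * x) = 0 by rewrite x13; field.
  have p2 : (1 - 3 * x) / 2 = 0 by rewrite x13; field.
  have := atom0_le; rewrite -{1}p1; have := atom0_le; rewrite -{1}p2; lra.
Qed.

Lemma mass34_le (x : R) : mass mu 3 x + mass mu 4 x <= m.
Proof.
rewrite /zpreim /=.
case: (ltgtP x 4^-1) => x14; rewrite !big_cons !big_nil.
- have := atom_le ((1 - 4 * x) / (2 - 2 * x)); lra.
- have := atom_le ((4 * x - 1) / (1 + 2 * x)); lra.
- have p1 : (4 * x - 1) / (1 + 2 * x) = 0 by rewrite x14; field.
  have p2 : (1 - 4 * x) / (2 - 2 * x) = 0 by rewrite x14; field.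
  have := atom0_le; rewrite -{1}p1; have := atom0_le; rewrite -{1}p2; lra.
Qed.

End mass_bounds.

Section invariant.
Variables (R : realType) (mu : probability R R) (mu_inv : M_invariant mu).

Lemma atom_outside_I0 (y : R) : ~ @I0 R y -> atom mu y = 0.
Proof.
move=> yI; apply/eqP; rewrite eq_le atom_ge0 andbT -lee_fin -atomE.
have mI : measurable (@I0 R) by exact: measurable_itv.
have <- : mu (~` @I0 R) = 0%:E by rewrite probability_setC // (proj1 mu_inv) subee.
apply: le_measure; rewrite ?inE.
- exact: measurable_set1.
- exact: measurableC.
- by move=> z ->.
Qed.

Lemma atom_eq_sum_fibers (x : R) :
  6 * atom mu x = \sum_(i < 6) fine (mu (@I0 R `&` zmap i @^-1` [set x])).
Proof.
have fiberE (i : 'I_6) : mu (@I0 R `&` zmap i @^-1` [set x]) =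
    (fine (mu (@I0 R `&` zmap i @^-1` [set x])))%:E.
  by rewrite fineK // fin_num_measure //; exact: measurable_fiber.
move: (proj2 mu_inv _ (measurable_set1 x)).
under eq_bigr do rewrite fiberE -EFinM.
rewrite sumEFin atomE => -[->]; rewrite mulr_sumr.
by apply: eq_bigr => i _; rewrite mulrA mulfV ?mul1r.
Qed.

Lemma atom_le_sum_mass (x : R) : 6 * atom mu x <=
  mass mu 0 x + mass mu 1 x + mass mu 2 x + mass mu 3 x + mass mu 4 x + mass mu 5 x.
Proof.
apply: (@le_trans _ _ (\sum_(i < 6) mass mu i x)).
  rewrite atom_eq_sum_fibers; apply: ler_sum => i _.
  exact/measure_sub_seq_le_atom/fiber_sub_zpreim.
by rewrite !big_ord_recl big_ord0 addr0 !addrA.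
Qed.

Lemma atom_half_le (m : R) : (forall y, atom mu y <= m) -> 2 * atom mu 2^-1 <= m.
Proof.
(* Abstracting [2^-1] makes the preimages identified with it the very same
   atom for [lra]. *)
move=> atom_le; have [h hE] : exists h : R, h = 2^-1 by exists 2^-1.
rewrite -hE; have := atom_le_sum_mass h; rewrite /zpreim /=.
case: (ltP h 2^-1) => [|_]; first lra.
case: (leP 4^-1 h) => [_|]; last lra.
case: (leP h 4^-1) => [|_]; first lra.
case: (leP h 3^-1) => [|_]; first lra.
rewrite andbF /= !big_cons !big_nil.
have -> : 2 * h / (3 - 2 * h) = h by rewrite hE; field.
have -> : (4 * h - 1) / (1 + 2 * h) = h by rewrite hE; field.
have := atom_le ((2 - 2 * h) / (4 - h)); have := atom_le ((2 - 3 * h) / (4 - 3 * h)).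
lra.
Qed.

Lemma atom_zero_le (m : R) : (forall y, atom mu y <= m) -> 2 * atom mu 0 <= m.
Proof.
move=> atom_le.
have half p : p = 2^-1 -> 2 * atom mu p <= m by move=> ->; exact: atom_half_le.
have [z zE] : exists z : R, z = 0 by exists 0.
rewrite -zE; have := atom_le_sum_mass z; rewrite /zpreim /=.
case: (ltP z 2^-1) => [_|]; last lra.
case: (leP 3^-1 z) => [|_]; first lra.
case: (leP 4^-1 z) => [|_]; first lra.
case: (leP z 4^-1) => [_|]; last lra.
case: (leP z 3^-1) => [_|]; last lra.
rewrite /= !big_cons !big_nil.
have -> : 2 * z / (3 - 2 * z) = z by rewrite zE; field.
have -> : 2 * z / (3 + z) = z by rewrite zE; field.
have h2 : 2 * atom mu ((2 - 2 * z) / (4 - z)) <= m by apply: half; rewrite zE; field.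
have h3 : 2 * atom mu ((2 - 3 * z) / (4 - 3 * z)) <= m by apply: half; rewrite zE; field.
have h5 : 2 * atom mu ((1 - 4 * z) / (2 - 2 * z)) <= m by apply: half; rewrite zE; field.
have h6 : 2 * atom mu ((1 - 3 * z) / 2) <= m by apply: half; rewrite zE; field.
lra.
Qed.

Lemma atom_eq0 (x : R) : atom mu x = 0.
Proof.
apply/eqP; rewrite eq_le atom_ge0 andbT leNgt; apply/negP.
move=> /exists_leftmost_heaviest_atom[x0 [m0 le_m lt_m]].
have : @I0 R x0 by apply: contrapT => /atom_outside_I0 a0; rewrite a0 ltxx in m0.
rewrite /I0 /= in_itv /= => /andP[x0_ge0 x0_le].
have zero := atom_zero_le le_m.
have x0_gt0 : 0 < x0.
  rewrite lt_neqAle x0_ge0 andbT; apply/eqP => x00.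
  by move: zero; rewrite x00; lra.
have x0_mem : 0 < x0 <= 2^-1 by rewrite x0_gt0 x0_le.
have := atom_le_sum_mass x0; have := mass01_lt le_m m0 x0_mem lt_m.
have := mass25_le le_m zero x0; have := mass34_le le_m zero x0.
lra.
Qed.

End invariant.

Theorem lemma16 (R : realType) (mu : probability R R) :
  M_invariant mu -> forall x : R, mu [set x] = 0%E.
Proof. by move=> mu_inv x; rewrite atomE atom_eq0. Qed.
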